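(* Fix a dimension $D\geqslant 2$. For any integer $r\geqslant 4$, any integer $m$ with $1\leqslant m\leqslant r/4$, and any integer $n$ with $2r m^{D-1}\leqslant n\leqslant r^D$, there is a subset $S$ of $n$ points of the integer grid $\{0,1,\dots,r-1\}^D$ such that $$\Delta(S, m^D-1)\geqslant \frac{r}{2m}-1.$$
   Context: For a graph $G$ whose vertices are points in $\mathbb{R}^D$, each edge $(u,v)$ has weight equal to the Euclidean distance $d(u,v)$ (edges may cross or overlap), and $d_G(u,v)$ is the length of a shortest path in $G$ between $u$ and $v$. The dilation of $G$ is $\Delta(G)=\max_{u\neq v\in V(G)} d_G(u,v)/d(u,v)$ (infinite if $G$ is disconnected). For a finite set $S$ of $n$ points and an integer $k\ge0$, $\Delta(S,k)$ is the minimum of $\Delta(G)$ over all graphs $G$ with vertex set exactly $S$ and exactly $n-1+k$ edges. *)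

From HB Require Import structures.
From mathcomp Require Import all_boot all_order all_algebra.
From mathcomp Require Import all_classical all_reals.
From mathcomp Require Import ereal.
Set Implicit Arguments. Unset Strict Implicit. Unset Printing Implicit Defensive.
Import Order.TTheory GRing.Theory Num.Theory.
Local Open Scope classical_set_scope.
Local Open Scope ring_scope.

Definition gridpt (D r : nat) := {ffun 'I_D -> 'I_r}.

Section Geometry.
Variables (R : realType) (D r : nat).
Local Notation pt := (gridpt D r).

Definition edist (x y : pt) : R :=
  Num.sqrt (\sum_(i < D) (((x i : nat)%:R - (y i : nat)%:R) ^+ 2)).

Definition is_graph_on (S : {set pt}) (E : {set {set pt}}) : Prop :=
  forall e, e \in E -> (#|e| = 2)%N /\ e \subset S.

(* A walk u = x_0, x_1, ..., x_k = v in the graph E (p = [x_1; ...; x_k]). *)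
Definition is_walk (E : {set {set pt}}) (u v : pt) (p : seq pt) : Prop :=
  path (fun x y => ([set x; y])%SET \in E) u p /\ last u p = v.

Definition walk_len (u : pt) (p : seq pt) : R :=
  \sum_(xy <- zip (u :: p) p) edist xy.1 xy.2.

(* Shortest-path distance d_G(u,v) (+oo if no path). *)
Definition graph_dist (E : {set {set pt}}) (u v : pt) : \bar R :=
  ereal_inf [set (walk_len u p)%:E | p in [set p | is_walk E u v p]].

(* Dilation of the graph with vertex set S and edge set E
   (+oo if the graph is disconnected). *)
Definition dilation (S : {set pt}) (E : {set {set pt}}) : \bar R :=
  ereal_sup [set (graph_dist E uv.1 uv.2 * ((edist uv.1 uv.2)^-1)%:E)%E
            | uv in [set uv : pt * pt | (uv.1 \in S) && (uv.2 \in S) && (uv.1 != uv.2)]].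

Definition Delta (S : {set pt}) (k : nat) : \bar R :=
  ereal_inf [set dilation S E
            | E in [set E : {set {set pt}} | is_graph_on S E /\ #|E| = (#|S| - 1 + k)%N]].

End Geometry.

(* Cut the grid into m^D cubic cells of side w = r %/ m and draw in each cell c a square
   ring of side l = w %/ 2, made of unit steps in the first two axes; S is any n-point set
   containing the 4 l m^D ring points.  Suppose a graph on S with |S| - 1 + m^D - 1 edges
   had dilation below r/(2m) - 1 < l.  Then every unit step of a ring is realized by a walk
   of length < l, which stays in a small box around the step, and chaining these walks
   turns ring c into a closed walk of the graph that crosses the eastward half-line from
   the centre of ring c an odd number of times and that of any other ring an even number
   of times.  These m^D closed walks are independent in the cycle space of the graph over
   GF(2), of dimension |E| - |S| + 1 = m^D - 1: contradiction.  The dimension count is done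
   by hand: (I, F) |-> the set of edges on which the sum over I of the crossing cochains
   plus the coboundary of F is odd is injective on pairs of a set of cells and a subset
   of S minus a root. *)

From HB Require Import structures.
From mathcomp Require Import all_boot all_order all_algebra.
From mathcomp Require Import all_classical all_reals.
From mathcomp Require Import ereal.
From mathcomp Require Import zify.
Import Order.TTheory GRing.Theory Num.Theory.
Set Implicit Arguments. Unset Strict Implicit. Unset Printing Implicit Defensive.

Lemma mem_zip (S T : eqType) (s : seq S) (t : seq T) x y :
  (x, y) \in zip s t -> x \in s /\ y \in t.
Proof.
elim: s t => [|a s IHs] [|b t] //=; rewrite inE => /predU1P[[-> ->]|/IHs[xs yt]].
  by split; apply: mem_head.
by rewrite !inE xs yt !orbT.
Qed.

Lemma exists_superset_card (T : finType) (A : {set T}) n : #|A| <= n <= #|T| ->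
  exists2 B : {set T}, A \subset B & #|B| = n.
Proof.
case/andP=> An; have [k -> {n An}] : exists k, n = #|A| + k.
  by exists (n - #|A|); rewrite subnKC.
elim: k A => [|k IHk] A kT; first by exists A; rewrite ?addn0.
have : 0 < #|~: A| by move: (cardsC A) kT; lia.
case/card_gt0P=> x; rewrite inE => xA.
have [|B AB cardB] := IHk ([set x] :|: A); first by rewrite cardsU1 xA add1n addSnnS.
exists B; last by rewrite cardB cardsU1 xA add1n addSnnS.
exact: fintype.subset_trans (finset.subsetUr _ _) AB.
Qed.

Section Parity.
Variable T : Type.
Implicit Types (h : T -> T -> bool) (s : T -> bool) (u : T) (p : seq T).

Definition parity h u p := \big[addb/false]_(xy <- zip (u :: p) p) h xy.1 xy.2.

Lemma parity_nil h u : parity h u [::] = false.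
Proof. by rewrite /parity big_nil. Qed.

Lemma parity_cons h u y p : parity h u (y :: p) = h u y (+) parity h y p.
Proof. by rewrite /parity big_cons. Qed.

Lemma parity_cat h u p q :
  parity h u (p ++ q) = parity h u p (+) parity h (last u p) q.
Proof.
elim: p u => [|y p IHp] u; first by rewrite parity_nil.
by rewrite cat_cons !parity_cons IHp addbA.
Qed.

Lemma parity_addb h1 h2 u p :
  parity (fun x y => h1 x y (+) h2 x y) u p = parity h1 u p (+) parity h2 u p.
Proof. exact: big_split. Qed.

Lemma parity_bigxor (I : finType) (A : {pred I}) (h : I -> T -> T -> bool) u p :
  parity (fun x y => \big[addb/false]_(i in A) h i x y) u p =
  \big[addb/false]_(i in A) parity (h i) u p.
Proof. exact: exchange_big. Qed.

Lemma parity_coboundary s u p :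
  parity (fun x y => s x (+) s y) u p = s u (+) s (last u p).
Proof.
elim: p u => [|y p IHp] u; first by rewrite parity_nil addbb.
by rewrite parity_cons IHp /= addbA -[s u (+) _ (+) _]addbA addbb addbF.
Qed.

Lemma parity_local (P : pred T) s h u p :
  {in P &, forall x y, h x y = s x (+) s y} -> all P (u :: p) ->
  parity h u p = s u (+) s (last u p).
Proof.
move=> hP; rewrite -parity_coboundary.
elim: p u => [|y p IHp] u; first by rewrite !parity_nil.
by case/and3P=> Pu Py Pp; rewrite !parity_cons hP // IHp //= Py.
Qed.

Definition trace (f : nat -> T) n := [seq f a | a <- iota 1 n].

Lemma last_trace (f : nat -> T) n u : u = f 0 -> last u (trace f n) = f n.
Proof.
move=> ->; case: n => [|n] //; rewrite /trace (last_map f).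
by rewrite -[n.+1]addn1 iotaD last_cat /= addnC.
Qed.

Lemma zip_cons_cat u p q :
  zip (u :: p ++ q) (p ++ q) = zip (u :: p) p ++ zip (last u p :: q) q.
Proof. by elim: p u => [|y p IHp] u //=; rewrite IHp. Qed.

Lemma zip_trace (f : nat -> T) n u : u = f 0 ->
  zip (u :: trace f n) (trace f n) = [seq (f a, f a.+1) | a <- iota 0 n].
Proof. by move=> ->; rewrite /trace; elim: n 0 => [|n IHn] k //=; rewrite IHn. Qed.

Lemma all_trace (P : pred T) (f : nat -> T) n u : u = f 0 ->
  (forall a, a <= n -> P (f a)) -> all P (u :: trace f n).
Proof.
move=> -> Pf /=; rewrite Pf //= all_map; apply/allP => a.
by rewrite mem_iota => /andP[_ an]; apply: Pf; lia.
Qed.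

End Parity.

Definition edge_rel (T : finType) (E : {set {set T}}) : rel T :=
  fun x y => [set x; y] \in E.

Lemma eq_set2 (T : finType) (x y x' y' : T) : x != y ->
  [set x; y] = [set x'; y'] -> (x', y') = (x, y) \/ (x', y') = (y, x).
Proof.
move=> xy exy.
have x'xy : x' \in [set x; y] by rewrite exy set21.
have y'xy : y' \in [set x; y] by rewrite exy set22.
have yx'y' : y \in [set x'; y'] by rewrite -exy set22.
have xx'y' : x \in [set x'; y'] by rewrite -exy set21.
move: xx'y' yx'y'; case/set2P: x'xy => ->; case/set2P: y'xy => -> //; auto.
- by rewrite finset.setUid => _ /set1P eyx; rewrite eyx eqxx in xy.
- by rewrite finset.setUid => /set1P exy'; rewrite exy' eqxx in xy.
Qed.

Section CycleSpace.
Variables (T C : finType) (E : {set {set T}}) (S : {set T}) (root : T).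
Variable g : C -> T -> T -> bool.
Variables (base : C -> T) (cyc : C -> seq T).
Hypothesis edge_card2 : {in E, forall e : {set T}, #|e| = 2}.
Hypothesis root_in_S : root \in S.
Hypothesis S_connected :
  {in S, forall x, exists2 p, path (edge_rel E) root p & last root p = x}.
Hypothesis g_sym : forall c, symmetric (g c).
Hypothesis cyc_closed : forall c, last (base c) (cyc c) = base c.
Hypothesis cyc_dual : forall c c', parity (g c) (base c') (cyc c') = (c == c').
Hypothesis cyc_realized : forall c' x y, (x, y) \in zip (base c' :: cyc c') (cyc c') ->
  exists p, [/\ path (edge_rel E) x p, last x p = y & forall c, parity (g c) x p = g c x y].

Implicit Types (I J : {set C}) (F G : {set T}) (x y u : T) (p : seq T).

Definition cochain I F x y :=
  (\big[addb/false]_(i in I) g i x y) (+) ((x \in F) (+) (y \in F)).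

Definition odd_edges I F :=
  [set e in E | [exists x, exists y, (e == [set x; y]) && cochain I F x y]].

Lemma cochain_sym I F : symmetric (cochain I F).
Proof.
move=> x y; rewrite /cochain [(x \in F) (+) _]addbC; congr (_ (+) _).
by apply: eq_bigr => i _; rewrite g_sym.
Qed.

Lemma in_odd_edges I F x y : [set x; y] \in E ->
  ([set x; y] \in odd_edges I F) = cochain I F x y.
Proof.
move=> Exy; have xy : x != y by move: (edge_card2 Exy); rewrite cards2; case: (x != y).
rewrite inE Exy; apply/existsP/idP => [[x' /existsP[y' /andP[/eqP exy]]]|]; last first.
  by move=> hxy; exists x; apply/existsP; exists y; rewrite eqxx.
by case: (eq_set2 xy exy) => -[-> ->] //; rewrite cochain_sym.
Qed.

Lemma parity_cochain I F u p : parity (cochain I F) u p =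
  (\big[addb/false]_(i in I) parity (g i) u p) (+) ((u \in F) (+) (last u p \in F)).
Proof. by rewrite parity_addb parity_bigxor parity_coboundary. Qed.

Lemma eq_parity_odd_edges I F J F' u p : odd_edges I F = odd_edges J F' ->
  path (edge_rel E) u p -> parity (cochain I F) u p = parity (cochain J F') u p.
Proof.
move=> eIJ; elim: p u => [|y p IHp] u; first by rewrite !parity_nil.
by case/andP=> Euy Pp; rewrite !parity_cons -!in_odd_edges // eIJ IHp.
Qed.

Lemma cochain_realized I F x y p : last x p = y ->
  (forall c, parity (g c) x p = g c x y) -> parity (cochain I F) x p = cochain I F x y.
Proof.
move=> lastp gp; rewrite parity_cochain lastp /cochain; congr (_ (+) _).
by apply: eq_bigr => i _; rewrite gp.
Qed.

Lemma parity_cochain_cyc I F c' : parity (cochain I F) (base c') (cyc c') = (c' \in I).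
Proof.
rewrite parity_cochain cyc_closed addbb addbF (eq_bigr (fun i => i == c')) => [|i _];
  last exact: cyc_dual.
have [c'I|c'I] := boolP (c' \in I); last first.
  by rewrite big1 // => i iI; apply: contraNF c'I => /eqP <-.
by rewrite (bigD1 c') //= eqxx big1 // => i /andP[_ /negbTE].
Qed.

Lemma odd_edges_injl I F J F' : odd_edges I F = odd_edges J F' -> I = J.
Proof.
move=> eIJ; apply/setP => c'.
rewrite -(parity_cochain_cyc I F c') -(parity_cochain_cyc J F' c') /parity.
apply: eq_big_seq => -[x y] /cyc_realized[p [Ep lastp gp]] /=.
by rewrite -!(cochain_realized _ _ lastp gp) (eq_parity_odd_edges eIJ Ep).
Qed.

Lemma odd_edges_injr I F F' : F \subset S :\ root -> F' \subset S :\ root ->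
  odd_edges I F = odd_edges I F' -> F = F'.
Proof.
move=> sF sF' eFF'; apply/setP => x.
have [xS|xS] := boolP (x \in S); last first.
  have notin G : G \subset S :\ root -> x \notin G.
    by move/fintype.subsetP/(_ x)/contra; apply; rewrite inE (negPf xS) andbF.
  by rewrite (negPf (notin _ sF)) (negPf (notin _ sF')).
have rootF G : G \subset S :\ root -> (root \in G) = false.
  by move/fintype.subsetP/(_ root)/contraNF; apply; rewrite !inE eqxx.
have [p Ep <-] := S_connected xS.
move: (eq_parity_odd_edges eFF' Ep); rewrite !parity_cochain !rootF //.
exact: addbI.
Qed.

Lemma card_edges_ge : #|S| - 1 + #|C| <= #|E|.
Proof.
pose dom := finset.setX (powerset [set: C]) (powerset (S :\ root)).
have inj : {in dom &, injective (fun IF => odd_edges IF.1 IF.2)}.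
  move=> [I F] [J F']; rewrite !inE /= => /andP[_ sF] /andP[_ sF'] eIJ.
  have eIJ' := odd_edges_injl eIJ; subst J.
  by rewrite (odd_edges_injr sF sF' eIJ).
have sub : [set odd_edges IF.1 IF.2 | IF in dom] \subset powerset E.
  apply/fintype.subsetP => _ /imsetP[IF _ ->]; rewrite inE.
  by apply/fintype.subsetP => e; rewrite inE => /andP[].
move: (subset_leq_card sub); rewrite card_in_imset // cardsX !card_powerset cardsT.
by rewrite -expnD leq_exp2l // (cardsD1 root S) root_in_S add1n subn1 addnC.
Qed.

End CycleSpace.

Section Boxes.
Variables (D r : nat).
Local Notation pt := (gridpt D r).
Implicit Types (x y z : pt) (b : nat).

Definition box b y z : pred pt := fun x => [forall k, `|x k - y k| + `|x k - z k| < b]%N.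

Definition cube b y : pred pt := fun x => [forall k, (`|x k - y k|).*2 < b]%N.

Lemma box_cube b y z k0 x : {in predC1 k0, y =1 z} -> box b y z x -> cube b y x || cube b z x.
Proof.
move=> yz /forallP xyz.
have off_k0 k : k != k0 -> (`|x k - y k|).*2 < b /\ (`|x k - z k|).*2 < b.
  by move=> kk0; move: (xyz k); rewrite yz ?inE //; lia.
have [at_y|at_z] : (`|x k0 - y k0|).*2 < b \/ (`|x k0 - z k0|).*2 < b.
  by move: (xyz k0); lia.
- by apply/orP; left; apply/forallP => k; have [->|/off_k0[]] := eqVneq k k0.
- by apply/orP; right; apply/forallP => k; have [->|/off_k0[]] := eqVneq k k0.
Qed.

End Boxes.

Section GridWalks.
Variables (R : realType) (D r : nat).
Local Notation pt := (gridpt D r).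
Local Open Scope ring_scope.
Implicit Types (x y z u v : pt) (p : seq pt).

Lemma natr_distn (a b : nat) : (`|a - b|%N%:R : R) = `|a%:R - b%:R|.
Proof. by rewrite natr_absz intr_norm rmorphB. Qed.

Lemma edist_ge_coord x y k : `|(x k)%:R - (y k)%:R| <= edist R x y.
Proof.
rewrite /edist -sqrtr_sqr ler_sqrt; last by apply: sumr_ge0 => i _; apply: sqr_ge0.
by rewrite (bigD1 k) //= lerDl; apply: sumr_ge0 => i _; apply: sqr_ge0.
Qed.

Lemma edist_gt0 x y : x != y -> 0 < edist R x y.
Proof.
case: (pickP [pred k | x k != y k]) => [k /= xyk _|xy]; last first.
  by case/eqP; apply/ffunP => k; apply/eqP; move/negbFE: (xy k).
by apply: lt_le_trans (edist_ge_coord x y k); rewrite normr_gt0 subr_eq0 eqr_nat.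
Qed.

Lemma edist_axis_step x y k : {in predC1 k, x =1 y} -> `|x k - y k|%N = 1 ->
  edist R x y = 1.
Proof.
move=> xy dk; rewrite /edist (bigD1 k) //= big1 => [|i ik]; last first.
  by rewrite xy ?subrr ?expr0n.
by rewrite addr0 -real_normK ?num_real // -natr_distn dk expr1n sqrtr1.
Qed.

Lemma walk_len_cons u y p : walk_len R u (y :: p) = edist R u y + walk_len R y p.
Proof. by rewrite /walk_len big_cons. Qed.

Lemma walk_len_ge_coord u p z k : z \in u :: p ->
  ((`|u k - z k| + `|z k - last u p k|)%N%:R : R) <= walk_len R u p.
Proof.
rewrite natrD !natr_distn.
elim: p u z => [|y p IHp] u z.
  by rewrite inE => /eqP ->; rewrite /walk_len big_nil subrr normr0 add0r.
rewrite walk_len_cons in_cons => /orP[/eqP ->|zp] /=.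
  rewrite subrr normr0 add0r (le_trans (ler_distD (y k)%:R _ _)) // lerD //.
    exact: edist_ge_coord.
  by move: (IHp y y (mem_head _ _)); rewrite subrr normr0 add0r.
apply: le_trans (lerD (edist_ge_coord u y k) (IHp y z zp)).
by rewrite addrA lerD2r ler_distD.
Qed.

Lemma dilation_walk S E (b : R) u v : (dilation R S E < b%:E)%E ->
  u \in S -> v \in S -> u != v ->
  exists2 p, is_walk E u v p & walk_len R u p < b * edist R u v.
Proof.
move=> dil uS vS uv.
have : (graph_dist R E u v * (edist R u v)^-1%:E < b%:E)%E.
  apply: le_lt_trans dil; apply: ereal_sup_ubound.
  by exists (u, v) => //=; rewrite uS vS uv.
rewrite lte_pdivrMr ?edist_gt0 // -EFinM => /ereal_inf_lt[_ [p walkp <-]].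
by rewrite lte_fin; exists p.
Qed.

Lemma dilation_connected S E (b : R) root : (dilation R S E < b%:E)%E -> root \in S ->
  {in S, forall x, exists2 p, path (edge_rel E) root p & last root p = x}.
Proof.
move=> dil rootS x xS; have [->|rx] := eqVneq root x; first by exists [::].
by have [p [walkp lastp] _] := dilation_walk dil rootS xS rx; exists p.
Qed.

Lemma walk_in_box b y z p : last y p = z -> walk_len R y p < b%:R -> all (box b y z) (y :: p).
Proof.
move=> lastp lenp; apply/allP => x xp; apply/forallP => k.
rewrite -(ltr_nat R) (le_lt_trans _ lenp) // distnC -lastp.
exact: walk_len_ge_coord.
Qed.

End GridWalks.

Section Rings.
Variables (D' r' m : nat).
Hypotheses (m_gt0 : 0 < m) (mr : 4 * m <= r'.+1).
Local Notation D := D'.+2.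
Local Notation r := r'.+1.
Local Notation pt := (gridpt D r).
Local Notation cell := {ffun 'I_D -> 'I_m}.

Definition cell_width := r %/ m.
Definition ring_side := cell_width %/ 2.
Definition ring_margin := ring_side %/ 2.
Local Notation w := cell_width.
Local Notation l := ring_side.
Local Notation h := ring_margin.
Implicit Types (c : cell) (x y : pt) (k : 'I_D).

Lemma ring_dims : [/\ 4 <= w, m * w <= r, l * 2 <= w, 2 <= l & h * 2 <= l <= h * 2 + 1].
Proof.
have w4 : 4 <= w by rewrite leq_divRL.
split=> //.
- by rewrite mulnC leq_divM.
- exact: leq_divM.
- by rewrite leq_divRL.
- by rewrite leq_divM /= {1}(divn_eq l 2) leq_add2l -ltnS ltn_mod.
Qed.

Lemma cell_bound c k : c k * w + w <= m * w.
Proof. by rewrite -mulSnr leq_mul2r ltn_ord orbT. Qed.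

Definition axis0 : 'I_D := ord0.
Definition axis1 : 'I_D := Ordinal (isT : 1 < D).

Lemma axis10 : (axis1 == axis0) = false. Proof. by []. Qed.

(* The ring of cell [c] is the boundary of the square [h, h + l]^2 in the first two axes,
   at offset [h] in the other ones; the margin [h = l/2] keeps every point within [l/2]
   of the ring inside the cell and on the same side of the centre lines as the nearby ring
   points. *)
Definition ringpt c (a b : nat) : pt :=
  [ffun k => inord (c k * w + h + (if k == axis0 then a else if k == axis1 then b else 0))].

Lemma ringptE c a b k : a <= l -> b <= l ->
  ringpt c a b k = c k * w + h + (if k == axis0 then a else if k == axis1 then b else 0) :> nat.
Proof.
move=> al bl; rewrite ffunE inordK // ltnS.
have [? ? ? ? ?] := ring_dims; have := cell_bound c k.
by case: (k == axis0); case: (k == axis1); lia.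
Qed.

Definition in_cell c x := [forall k, x k %/ w == c k].
Definition east c x := in_cell c x && (c axis0 * w + h + h < x axis0).
Definition north c x := c axis1 * w + h + h < x axis1.
(* A step is counted when it crosses the half-line leaving the centre of ring [c]
   eastwards: along a closed walk with short steps its parity is the winding number
   mod 2 around that centre. *)
Definition cross_ray c x y := [&& east c x, east c y & north c x (+) north c y].

Lemma cross_ray_sym c : symmetric (cross_ray c).
Proof. by move=> x y; rewrite /cross_ray andbCA addbC. Qed.

Lemma in_cellP c x : reflect (forall k, c k * w <= x k < c k * w + w) (in_cell c x).
Proof.
have w_gt0 : 0 < w by case: ring_dims; lia.
have cellE k : (x k %/ w == c k) = (c k * w <= x k < c k * w + w).
  by rewrite eqn_leq -ltnS ltn_divLR // leq_divRL // mulSn addnC andbC.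
by apply: (iffP forallP) => xc k; [rewrite -cellE | rewrite cellE].
Qed.

Lemma in_cell_inj c c' x : in_cell c x -> in_cell c' x -> c = c'.
Proof.
move=> /forallP xc /forallP xc'; apply/ffunP => k; apply: ord_inj.
by rewrite -(eqP (xc k)) (eqP (xc' k)).
Qed.

Lemma cube_in_cell c a b x : a <= l -> b <= l -> cube l (ringpt c a b) x -> in_cell c x.
Proof.
move=> al bl /forallP xn; apply/in_cellP => k; move: (xn k); rewrite ringptE //.
have [? ? ? ? ?] := ring_dims; have := cell_bound c k.
by case: (k == axis0); case: (k == axis1); lia.
Qed.

Lemma cube_south c a x : a <= l -> cube l (ringpt c a 0) x -> ~~ north c x.
Proof.
move=> al /forallP/(_ axis1); rewrite ringptE // axis10 eqxx /north.
by case: ring_dims; lia.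
Qed.

Lemma cube_north c a x : a <= l -> cube l (ringpt c a l) x -> north c x.
Proof.
move=> al /forallP/(_ axis1); rewrite ringptE // axis10 eqxx /north.
by case: ring_dims; lia.
Qed.

Lemma cube_east c b x : b <= l -> cube l (ringpt c l b) x -> east c x.
Proof.
move=> bl xn; rewrite /east (cube_in_cell _ bl xn) //=.
by move/forallP/(_ axis0): xn; rewrite ringptE // eqxx; case: ring_dims; lia.
Qed.

Lemma cube_west c b x : b <= l -> cube l (ringpt c 0 b) x -> ~~ east c x.
Proof.
move=> bl /forallP/(_ axis0); rewrite /east ringptE // eqxx negb_and orbC => xn.
by apply/orP; left; rewrite -leqNgt; case: ring_dims xn; lia.
Qed.

Lemma cube_self y : cube l y y.
Proof. by apply/forallP => k; rewrite distnn; case: ring_dims; lia. Qed.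

Definition ring_base c := ringpt c 0 0.

Definition ring_walk c : seq pt :=
  trace (fun a => ringpt c a 0) l ++ trace (fun b => ringpt c l b) l ++
  trace (fun a => ringpt c (l - a) l) l ++ trace (fun b => ringpt c 0 (l - b)) l.

Definition ring_steps c := zip (ring_base c :: ring_walk c) (ring_walk c).

Lemma last_ring_walk c : last (ring_base c) (ring_walk c) = ring_base c.
Proof. by rewrite !last_cat !last_trace ?subn0 ?subnn. Qed.

Lemma ring_stepP c x y : (x, y) \in ring_steps c ->
  exists2 a, a < l & [\/ (x, y) = (ringpt c a 0, ringpt c a.+1 0),
                         (x, y) = (ringpt c l a, ringpt c l a.+1),
                         (x, y) = (ringpt c (l - a) l, ringpt c (l - a.+1) l) |
                         (x, y) = (ringpt c 0 (l - a), ringpt c 0 (l - a.+1))].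
Proof.
rewrite /ring_steps !zip_cons_cat !last_trace ?subn0 ?subnn // !zip_trace ?subn0 // !mem_cat.
by case/or4P=> /mapP[a]; rewrite mem_iota => /andP[_ al] xy; exists a => //;
  [apply: Or41 | apply: Or42 | apply: Or43 | apply: Or44].
Qed.

Lemma ringpt_axis0 c a a' b : a <= l -> a' <= l -> b <= l ->
  {in predC1 axis0, ringpt c a b =1 ringpt c a' b}.
Proof. by move=> al a'l bl i /negPf i0; apply: ord_inj; rewrite !ringptE // i0. Qed.

Lemma ringpt_axis1 c a b b' : a <= l -> b <= l -> b' <= l ->
  {in predC1 axis1, ringpt c a b =1 ringpt c a b'}.
Proof. by move=> al bl b'l i /negPf i1; apply: ord_inj; rewrite !ringptE // i1. Qed.

Lemma ring_step_axis c x y : (x, y) \in ring_steps c ->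
  exists k, {in predC1 k, x =1 y} /\ `|x k - y k| = 1.
Proof.
case/ring_stepP => a al [] [-> ->].
- by exists axis0; split; [apply: ringpt_axis0 | rewrite !ringptE ?eqxx]; lia.
- by exists axis1; split; [apply: ringpt_axis1 | rewrite !ringptE ?axis10 ?eqxx]; lia.
- by exists axis0; split; [apply: ringpt_axis0 | rewrite !ringptE ?eqxx]; lia.
- by exists axis1; split; [apply: ringpt_axis1 | rewrite !ringptE ?axis10 ?eqxx]; lia.
Qed.

Lemma ring_box_cube c x y u : (x, y) \in ring_steps c ->
  box l x y u -> cube l x u || cube l y u.
Proof. by case/ring_step_axis=> k [xy _]; apply: box_cube xy. Qed.

Lemma ring_box_in_cell c x y : (x, y) \in ring_steps c ->
  {subset box l x y <= in_cell c}.
Proof.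
move=> st u /(ring_box_cube st); case/ring_stepP: st => a al.
by case=> -[-> ->] /orP[] hu; apply: cube_in_cell hu; lia.
Qed.

Lemma ring_box_side c x y : (x, y) \in ring_steps c ->
  [\/ {subset box l x y <= predC (north c)}, {subset box l x y <= east c},
      {subset box l x y <= north c} | {subset box l x y <= predC (east c)}].
Proof.
move=> st; have near_end := ring_box_cube st.
case/ring_stepP: st near_end => a al [] [-> ->] near_end.
- by apply: Or41 => u /near_end /orP[] hu; apply: cube_south hu; lia.
- by apply: Or42 => u /near_end /orP[] hu; apply: cube_east hu; lia.
- by apply: Or43 => u /near_end /orP[] hu; apply: cube_north hu; lia.
- by apply: Or44 => u /near_end /orP[] hu; apply: cube_west hu; lia.
Qed.

Lemma ringpt_in_cell c a b : a <= l -> b <= l -> in_cell c (ringpt c a b).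
Proof. by move=> al bl; apply: cube_in_cell al bl (cube_self _). Qed.

Lemma east_other c c' u : c != c' -> in_cell c' u -> ~~ east c u.
Proof. by move=> cc' uc'; apply: contra cc' => /andP[uc _]; rewrite (in_cell_inj uc uc'). Qed.

Lemma cross_ray_south c : {in predC (north c) &, forall u v, cross_ray c u v = false}.
Proof. by move=> u v /negPf nu /negPf nv; rewrite /cross_ray nu nv !andbF. Qed.

Lemma cross_ray_north c : {in north c &, forall u v, cross_ray c u v = false}.
Proof. by move=> u v nu nv; rewrite /cross_ray (nu : north c u) (nv : north c v) !andbF. Qed.

Lemma cross_ray_west c : {in predC (east c) &, forall u v, cross_ray c u v = false}.
Proof. by move=> u v /negPf eu _; rewrite /cross_ray eu. Qed.

Lemma cross_ray_east c : {in east c &, forall u v, cross_ray c u v = north c u (+) north c v}.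
Proof. by move=> u v eu ev; rewrite /cross_ray (eu : east c u) (ev : east c v). Qed.

Lemma cross_ray_local c c' x y : (x, y) \in ring_steps c' ->
  exists s : pt -> bool, {in box l x y &, forall u v, cross_ray c u v = s u (+) s v}.
Proof.
case: (eqVneq c c') => [<-|cc'] st; last first.
  exists (fun _ => false) => u v /(ring_box_in_cell st)/(east_other cc') hu.
  by move=> /(ring_box_in_cell st)/(east_other cc') hv; exact: cross_ray_west hu hv.
case: (ring_box_side st) => side.
- by exists (fun _ => false) => u v /side hu /side hv; exact: cross_ray_south hu hv.
- by exists (north c) => u v /side hu /side hv; exact: cross_ray_east hu hv.
- by exists (fun _ => false) => u v /side hu /side hv; exact: cross_ray_north hu hv.
- by exists (fun _ => false) => u v /side hu /side hv; exact: cross_ray_west hu hv.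
Qed.

Lemma all_ring_walk c (P : pred pt) : (forall a b, a <= l -> b <= l -> P (ringpt c a b)) ->
  all P (ring_base c :: ring_walk c).
Proof.
move=> Pc; have allT f u : u = f 0 -> (forall a, a <= l -> P (f a)) -> all P (trace f l).
  by move=> uf Pf; case/andP: (all_trace uf Pf).
rewrite /ring_walk -cat_cons !all_cat; apply/and4P; split.
- by apply: all_trace => // a al; apply: Pc.
all: by apply: (allT _ _ erefl) => a al; apply: Pc; lia.
Qed.

Lemma parity_ring c c' : parity (cross_ray c) (ring_base c') (ring_walk c') = (c == c').
Proof.
case: (eqVneq c c') => [<-|cc']; last first.
  rewrite (parity_local (s := fun _ => false) (@cross_ray_west c)) //.
  by apply: all_ring_walk => a b al bl; apply: east_other cc' (ringpt_in_cell _ al bl).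
rewrite /ring_walk !parity_cat !last_trace ?subn0 ?subnn //.
rewrite (parity_local (s := fun _ => false) (@cross_ray_south c)); last first.
  by apply: all_trace => // a al; apply: cube_south (cube_self _).
rewrite (parity_local (s := north c) (@cross_ray_east c)); last first.
  by apply: all_trace => // b bl; apply: cube_east (cube_self _).
rewrite (parity_local (s := fun _ => false) (@cross_ray_north c)); last first.
  by apply: all_trace => [|a al]; [rewrite subn0 | apply: cube_north (cube_self _); lia].
rewrite (parity_local (s := fun _ => false) (@cross_ray_west c)); last first.
  by apply: all_trace => [|b bl]; [rewrite subn0 | apply: cube_west (cube_self _); lia].
rewrite last_trace // (negPf (cube_south _ (cube_self _))) ?(cube_north _ (cube_self _)) //.
Qed.

Definition core : {set pt} := \bigcup_(c : cell) [set x in ring_walk c].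

Lemma card_core : #|core| <= 2 * r * m ^ D'.+1.
Proof.
apply: leq_trans (unstable.card_big_setU _ _ _) _.
rewrite (@leq_trans (\sum_(c : cell) 4 * l)) //.
  apply: leq_sum => c _; rewrite cardsE (leq_trans (card_size _)) //.
  by rewrite !size_cat !size_map size_iota; lia.
rewrite sum_nat_const card_ffun !card_ord expnSr -mulnA mulnC leq_mul2r.
case: ring_dims => _ mw l2 _ _; have : m * (l * 2) <= m * w by rewrite leq_mul2l l2 orbT.
lia.
Qed.

Lemma mem_core c x : x \in ring_walk c -> x \in core.
Proof. by move=> xc; apply/bigcupP; exists c; rewrite ?inE. Qed.

Lemma ring_base_in_core c : ring_base c \in core.
Proof.
apply: (@mem_core c); rewrite /ring_walk !mem_cat; apply/or4P; apply: Or44.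
have -> : ring_base c = ringpt c 0 (l - l) by rewrite subnn.
by rewrite /trace (map_f (fun b => ringpt c 0 (l - b))) // mem_iota; case: ring_dims; lia.
Qed.

Lemma ring_step_in_core c x y : (x, y) \in ring_steps c ->
  x \in core /\ y \in core.
Proof.
case/mem_zip => xc yc; split; last exact: mem_core yc.
by case/predU1P: xc => [->|]; [exact: ring_base_in_core | exact: mem_core].
Qed.

End Rings.

Section RingDilation.
Variables (R : realType) (D' r' m : nat).
Local Notation pt := (gridpt D'.+2 r'.+1).
Local Notation cell := {ffun 'I_D'.+2 -> 'I_m}.
Local Notation l := (ring_side r' m).
Variables (S : {set pt}) (E : {set {set pt}}).
Hypotheses (m_gt0 : (0 < m)%N) (mr : (4 * m <= r'.+1)%N).
Hypotheses (coreS : core D' r' m \subset S) (graphE : is_graph_on S E).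
Hypothesis dilE : (dilation R S E < (l%:R)%:E)%E.
Local Open Scope ring_scope.

Lemma ring_step_edist (c : cell) x y : (x, y) \in ring_steps r' c -> edist R x y = 1.
Proof. by case/(ring_step_axis m_gt0 mr) => k [xy dk]; apply: edist_axis_step xy dk. Qed.

Lemma ring_step_realized (c' : cell) x y p : (x, y) \in ring_steps r' c' ->
  last x p = y -> walk_len R x p < l%:R ->
  forall c : cell, parity (cross_ray c) x p = cross_ray c x y.
Proof.
move=> st lastp lenp c; have [s sP] := cross_ray_local m_gt0 mr c st.
have inbox := walk_in_box lastp lenp.
have yin : box l x y y by move/allP: inbox; apply; rewrite -lastp mem_last.
by rewrite (parity_local sP inbox) lastp sP //; case/andP: inbox.
Qed.

Lemma ring_step_walk (c' : cell) x y : (x, y) \in ring_steps r' c' ->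
  exists p, [/\ path (edge_rel E) x p, last x p = y &
                forall c : cell, parity (cross_ray c) x p = cross_ray c x y].
Proof.
move=> st; have [xc yc] := ring_step_in_core m_gt0 mr st.
have xy : x != y.
  by have [k [_]] := ring_step_axis m_gt0 mr st; apply: contraPneq => ->; rewrite distnn.
have [p [walkp lastp]] := dilation_walk dilE (fintype.subsetP coreS _ xc) (fintype.subsetP coreS _ yc) xy.
rewrite (ring_step_edist st) mulr1 => lenp.
by exists p; split => // c; apply: ring_step_realized st lastp lenp c.
Qed.

Lemma card_edges_ge_rings : (#|S| - 1 + m ^ D'.+2 <= #|E|)%N.
Proof.
pose c0 : cell := [ffun => Ordinal m_gt0].
have root_in_S : ring_base r' c0 \in S by apply: (fintype.subsetP coreS); exact: ring_base_in_core.
suff : (#|S| - 1 + #|cell| <= #|E|)%N by rewrite card_ffun !card_ord.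
apply: (card_edges_ge (root := ring_base r' c0) (g := @cross_ray D' r' m)
                      (base := @ring_base D' r' m) (cyc := @ring_walk D' r' m)) => //.
- by move=> e /graphE[].
- exact: dilation_connected dilE root_in_S.
- exact: cross_ray_sym.
- exact: last_ring_walk.
- exact: parity_ring.
- exact: ring_step_walk.
Qed.

End RingDilation.

Lemma ring_side_gt (R : realFieldType) (r m : nat) : (0 < m)%N ->
  (r%:R / (2 * m%:R) - 1 < ((r %/ m) %/ 2)%:R :> R)%R.
Proof.
move=> m_gt0; have r_lt : (r < ((r %/ m) %/ 2).+1 * (m * 2))%N.
  by rewrite -divnMA ltn_ceil // muln_gt0 m_gt0.
rewrite ltrBlDr ltr_pdivrMr ?mulr_gt0 ?ltr0n //.
by rewrite -(ltr_nat R) -addn1 natrM natrD mulnC natrM in r_lt.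
Qed.

Local Open Scope ring_scope.

Theorem theorem7 (R : realType) (D r m n : nat) :
  (2 <= D)%N -> (4 <= r)%N -> (1 <= m)%N -> (4 * m <= r)%N ->
  (2 * r * m ^ D.-1 <= n)%N -> (n <= r ^ D)%N ->
  exists S : {set gridpt D r},
    #|S| = n /\
    (((r%:R : R) / (2 * m%:R) - 1)%:E <= Delta R S (m ^ D - 1))%E.
Proof.
case: D => [|[|D']] // _; case: r => [|r'] // _ m_gt0 mr core_le_n n_le.
have [S coreS cardS] : exists2 S : {set gridpt D'.+2 r'.+1}, core D' r' m \subset S & #|S| = n.
  apply: (exists_superset_card (n := n)); rewrite card_ffun !card_ord n_le andbT.
  exact: leq_trans (card_core _ m_gt0 mr) core_le_n.
exists S; split => //; apply: le_ereal_inf_tmp => _ [E [graphE cardE] <-].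
rewrite leNgt; apply/negP => dilE.
have /(card_edges_ge_rings m_gt0 mr coreS graphE) : (dilation R S E < (ring_side r' m)%:R%:E)%E.
  by apply: lt_trans dilE _; rewrite lte_fin ring_side_gt.
have : (0 < m ^ D'.+2)%N by rewrite expn_gt0 m_gt0.
by rewrite cardE leq_add2l; lia.
Qed.
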